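(* For every $n\ge1$ there are infinitely many pairwise non-isomorphic tautological algebras.
   Context: Work over $\mathbb{C}$. The Heisenberg group $\mathbb{H}_{2n+1}$ is $\mathbb{W}\times\mathbb{C}$ ($\mathbb{W}$ a $2n$-dimensional space with non-degenerate skew form $\omega$) with law $(w_1,t_1)(w_2,t_2)=(w_1+w_2,t_1+t_2+\tfrac12\omega(w_1,w_2))$; $T=(0,1)$, $\mathbb{I}=\mathbb{C}T$ its center. An $\mathbb{H}_{2n+1}$-structure on $\mathbb{P}V$, $V\cong\mathbb{C}^{2n+2}$, is an effective algebraic action with dense open orbit, whose boundary is a hyperplane $\mathbb{P}V'$. Viewing $\mathbb{H}_{2n+1}\subset\mathbb{P}\mathrm{GL}_{2n+2}(\mathbb{C})$ and with $\pi:\mathrm{GL}_{2n+2}\to\mathbb{P}\mathrm{GL}_{2n+2}$ the projection, the associated algebra $\mathcal{A}$ is the unital associative subalgebra of $\mathrm{Mat}_{2n+2}(\mathbb{C})$ generated by $\pi^{-1}(\mathbb{H}_{2n+1})$. For $o$ in the open orbit let $v=\overline{\mathbb{I}\cdot o}\setminus\mathbb{I}\cdot o$, $\hat v$ a representative, $\widetilde V=V/\mathbb{C}\hat v$; if $T$ fixes $\mathbb{P}V'$ pointwise, the action descends to a $\mathbb{G}_a^{2n}$-structure of $\mathbb{H}_{2n+1}/\mathbb{I}$ on $\mathbb{P}\widetilde V$, called tautological if in suitable coordinates it is $(a_i)\cdot[z_0,\dots,z_{2n}]=[z_0,z_1+a_1z_0,\dots,z_{2n}+a_{2n}z_0]$.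 A tautological algebra is the associated algebra $\mathcal{A}$ of an $\mathbb{H}_{2n+1}$-structure on $\mathbb{P}^{2n+1}$ for which $T$ fixes the boundary pointwise and the induced $\mathbb{G}_a^{2n}$-structure is tautological. Isomorphism means isomorphism of unital associative algebras. *)

From mathcomp Require Import all_boot all_algebra.
From mathcomp Require Import Rstruct complex.
From Stdlib Require Rdefinitions.

Set Implicit Arguments.
Unset Strict Implicit.
Unset Printing Implicit Defensive.
Import GRing.Theory.
Local Open Scope ring_scope.

Definition C : closedFieldType := complex Rdefinitions.R.

Definition dimW (n : nat) : nat := (n + n)%N.
Definition dimV (n : nat) : nat := (n + n).+2.

Definition omega (n : nat) (x y : 'rV[C]_(n + n)) : C :=
  \sum_(i < n) (x 0 (lshift n i) * y 0 (rshift n i)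
                - x 0 (rshift n i) * y 0 (lshift n i)).

Definition Heis (n : nat) : Type := ('rV[C]_(n + n) * C)%type.

Definition hmul (n : nat) (g h : Heis n) : Heis n :=
  (g.1 + h.1, g.2 + h.2 + 2^-1 * omega g.1 h.1).

Definition hone (n : nat) : Heis n := (0, 0).

Definition hcent (n : nat) (t : C) : Heis n := (0, t).

Definition heis_polyfun (n : nat) (f : Heis n -> C) : Prop :=
  exists s : seq (C * ((n + n).-tuple nat * nat)),
    forall g : Heis n,
      f g = \sum_(p <- s)
              p.1 * (\prod_(i < n + n) g.1 0 i ^+ tnth p.2.1 i) * g.2 ^+ p.2.2.

(** Points of P V are represented by nonzero column vectors; two vectors
    represent the same point iff they are proportional. *)
Definition proj_eq (N : nat) (x y : 'cV[C]_N) : Prop :=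
  exists c : C, c != 0 /\ y = c *: x.

Definition heval (N : nat) (s : seq (C * N.-tuple nat)) (x : 'cV[C]_N) : C :=
  \sum_(p <- s) p.1 * \prod_(i < N) x i 0 ^+ tnth p.2 i.

Definition homog (N : nat) (d : nat) (s : seq (C * N.-tuple nat)) : bool :=
  all (fun p => (\sum_(i < N) tnth p.2 i == d)%N) s.

(** Zariski closure in P V of a set S of points (S given as a cone of
    nonzero vectors): the common zero locus of all homogeneous polynomials
    vanishing on S. *)
Definition zclosure (N : nat) (S : 'cV[C]_N -> Prop) (x : 'cV[C]_N) : Prop :=
  x != 0 /\
  forall (d : nat) (s : seq (C * N.-tuple nat)), homog d s ->
    (forall y, S y -> heval s y = 0) -> heval s x = 0.

(** The algebraic action is
    given by a lift [rho : H -> GL_(2n+2)] with polynomial entries which is a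
    homomorphism modulo scalars (i.e. the composite H -> PGL_(2n+2) is a
    homomorphism of algebraic groups); it is effective (trivial kernel in
    PGL), and there is a point [o] whose orbit is exactly the complement of
    the hyperplane P V' = {l = 0} (so the orbit is open and dense, and its
    boundary is the hyperplane P V'). *)
Definition Hstructure (n : nat) (rho : Heis n -> 'M[C]_(dimV n))
    (l : 'rV[C]_(dimV n)) (o : 'cV[C]_(dimV n)) : Prop :=
  (forall i j, heis_polyfun (fun g => rho g i j)) /\
  (forall g, rho g \in unitmx) /\
  (forall g h, exists c : C, c != 0 /\ rho (hmul g h) = c *: (rho g *m rho h)) /\
  (forall g, (exists c : C, rho g = c%:M) -> g = hone n) /\
  l != 0 /\ o != 0 /\
  (forall x : 'cV[C]_(dimV n), x != 0 ->
         (l *m x != 0 <-> exists g, proj_eq (rho g *m o) x)).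

(** The standard tautological G_a^(2n)-action on P^(2n):
    (a_i) . [z_0, ..., z_2n] = [z_0, z_1 + a_1 z_0, ..., z_2n + a_2n z_0]. *)
Definition taut_mx (n : nat) (a : 'rV[C]_(n + n)) : 'M[C]_((n + n).+1) :=
  \matrix_(i, j) ((i == j)%:R +
                  (j == ord0)%:R *
                    (if unlift ord0 i is Some k then a 0 k else 0)).

(** [rho] is a tautological H_(2n+1)-structure: it is an H-structure with
    hyperplane P V' = {l = 0} and open orbit through [o]; T = (0,1) fixes
    P V' pointwise; [vhat] represents the point v, the unique point of the
    Zariski closure of I.o not in I.o; and the induced action of H/I = G_a^(2n)
    on P(V / C vhat) is tautological in suitable coordinates: [q] is a linear
    surjection V -> C^(2n+1) with kernel C vhat (a choice of coordinates
    z_0..z_2n on V / C vhat), and for every (w,t) the induced projective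
    transformation of P(V / C vhat) is the tautological one for a = w. *)
Definition tautological_structure (n : nat) (rho : Heis n -> 'M[C]_(dimV n)) : Prop :=
  exists (l : 'rV[C]_(dimV n)) (o vhat : 'cV[C]_(dimV n))
         (q : 'M[C]_((n + n).+1, dimV n)),
  Hstructure rho l o /\
  (forall x : 'cV[C]_(dimV n), x != 0 -> l *m x = 0 ->
         proj_eq x (rho (hcent n 1) *m x)) /\
  vhat != 0 /\
  (let Io := fun y => exists t : C, proj_eq (rho (hcent n t) *m o) y in
       forall x : 'cV[C]_(dimV n), x != 0 ->
         ((zclosure Io x /\ ~ Io x) <-> proj_eq vhat x)) /\
  \rank q = (n + n).+1 /\
  q *m vhat = 0 /\
  (forall g : Heis n, exists c : C, c != 0 /\
         q *m rho g = c *: (taut_mx g.1 *m q)).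

Inductive gen_alg (N : nat) (S : 'M[C]_N -> Prop) : 'M[C]_N -> Prop :=
  | gen_alg_gen M : S M -> gen_alg S M
  | gen_alg_one : gen_alg S 1%:M
  | gen_alg_add M M' : gen_alg S M -> gen_alg S M' -> gen_alg S (M + M')
  | gen_alg_scale (c : C) M : gen_alg S M -> gen_alg S (c *: M)
  | gen_alg_mul M M' : gen_alg S M -> gen_alg S M' -> gen_alg S (M *m M').

(** The associated algebra: generated by pi^-1(H) = { c rho(g) : c <> 0 }. *)
Definition assoc_alg (n : nat) (rho : Heis n -> 'M[C]_(dimV n)) : 'M[C]_(dimV n) -> Prop :=
  gen_alg (fun M => exists (c : C) (g : Heis n), c != 0 /\ M = c *: rho g).

Definition tautological_algebra (n : nat) (A : 'M[C]_(dimV n) -> Prop) : Prop :=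
  exists rho : Heis n -> 'M[C]_(dimV n),
    tautological_structure rho /\ (forall M, A M <-> assoc_alg rho M).

Definition alg_iso (N : nat) (A B : 'M[C]_N -> Prop) : Prop :=
  exists f : 'M[C]_N -> 'M[C]_N,
  (forall x, A x -> B (f x)) /\
  (forall y, B y -> exists2 x, A x & f x = y) /\
  (forall x y, A x -> A y -> f x = f y -> x = y) /\
  (forall x y, A x -> A y -> f (x + y) = f x + f y) /\
  (forall (c : C) x, A x -> f (c *: x) = c *: f x) /\
  (forall x y, A x -> A y -> f (x *m y) = f x *m f y) /\
  f 1%:M = 1%:M.

From mathcomp Require Import all_boot all_algebra.
From mathcomp Require Import ring zify Rstruct complex.

(* Split V = C e0 + W + C elast.  For p in C let N_u (u in W) send e0 to u and W to
   C elast through a bilinear form beta_p, and let Z send e0 to elast, so that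
   N_u N_v = beta_p(u, v) Z and all other products of N's and Z vanish.  The span A_p
   of 1, the N_u and Z is an algebra, and (w, t) |-> 1 + N_w + (t + Q_p(w)) Z is a
   tautological H-structure with associated algebra A_p, provided
   beta_p(u, v) - beta_p(v, u) = omega(u, v) and Q_p polarises to the symmetric part
   of beta_p.  A_p is told apart up to isomorphism by the scalars c for which it has
   square-zero x, y with x y <> 0 and x z - c z x in C x for all z: when p, p - 1 are
   nonzero, c = p / (p - 1) is one, and every such c has p = c (p - 1) or p - 1 = c p.
   The values p = k + 2 thus give pairwise non-isomorphic algebras. *)

Set Implicit Arguments.
Unset Strict Implicit.
Unset Printing Implicit Defensive.
Import GRing.Theory Num.Theory.
Local Open Scope ring_scope.

Section HeisPolyFun.
Variable n : nat.
Local Notation polyfun := (@heis_polyfun n).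

Lemma polyfun_ext (f f' : Heis n -> C) : f =1 f' -> polyfun f' -> polyfun f.
Proof. by move=> ff' [s hs]; exists s => g; rewrite ff' hs. Qed.

Lemma polyfun_const c : polyfun (fun _ => c).
Proof.
exists [:: (c, ([tuple 0%N | _ < n + n], 0%N))] => g.
rewrite big_seq1; cbn [fst snd]; rewrite expr0 mulr1 big1 ?mulr1 // => i _.
by rewrite tnth_mktuple expr0.
Qed.

Lemma polyfun_center : polyfun (fun g => g.2).
Proof.
exists [:: (1, ([tuple 0%N | _ < n + n], 1%N))] => g.
rewrite big_seq1; cbn [fst snd]; rewrite expr1 mul1r big1 ?mul1r // => i _.
by rewrite tnth_mktuple expr0.
Qed.

Lemma polyfun_coord k : polyfun (fun g => g.1 0 k).
Proof.
exists [:: (1, ([tuple (i == k : nat) | i < n + n], 0%N))] => g.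
rewrite big_seq1; cbn [fst snd]; rewrite expr0 mulr1 mul1r (bigD1 k) // tnth_mktuple eqxx expr1.
by rewrite big1 ?Monoid.mulm1 // => i /negPf ik; rewrite tnth_mktuple ik expr0.
Qed.

Lemma polyfun_add f1 f2 : polyfun f1 -> polyfun f2 -> polyfun (fun g => f1 g + f2 g).
Proof. by move=> [s1 h1] [s2 h2]; exists (s1 ++ s2) => g; rewrite big_cat h1 h2. Qed.

Lemma polyfun_mul f1 f2 : polyfun f1 -> polyfun f2 -> polyfun (fun g => f1 g * f2 g).
Proof.
move=> [s1 h1] [s2 h2].
exists [seq (q1.1 * q2.1, ([tuple (tnth q1.2.1 i + tnth q2.2.1 i)%N | i < n + n],
                          (q1.2.2 + q2.2.2)%N)) | q1 <- s1, q2 <- s2] => g.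
rewrite h1 h2 big_allpairs_dep big_distrl; apply: eq_bigr => q1 _.
rewrite big_distrr; apply: eq_bigr => q2 _; cbn [fst snd].
have -> : \prod_(i < n + n) g.1 0 i ^+ tnth [tuple (tnth q1.2.1 i + tnth q2.2.1 i)%N | i < n + n] i
   = (\prod_(i < n + n) g.1 0 i ^+ tnth q1.2.1 i) * \prod_(i < n + n) g.1 0 i ^+ tnth q2.2.1 i.
  by rewrite -big_split; apply: eq_bigr => i _; rewrite tnth_mktuple exprD.
(* [big_distrr] leaves a [Monoid.law] product, which [ring] does not parse *)
rewrite exprD -[LHS]/(_ * _); ring.
Qed.

Lemma polyfun_sum (I : Type) (r : seq I) (P : pred I) (F : I -> Heis n -> C) :
  (forall i, polyfun (F i)) -> polyfun (fun g => \sum_(i <- r | P i) F i g).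
Proof.
move=> hF; elim: r => [|a r IH].
  by apply: polyfun_ext (polyfun_const 0) => g; rewrite big_nil.
rewrite /=; case Pa: (P a).
  by apply: polyfun_ext (polyfun_add (hF a) IH) => g; rewrite big_cons Pa.
by apply: polyfun_ext IH => g; rewrite big_cons Pa.
Qed.

Definition polymx a b (f : Heis n -> 'M[C]_(a, b)) := forall i j, polyfun (fun g => f g i j).

Lemma polymx_const a b (M : 'M[C]_(a, b)) : polymx (fun _ => M).
Proof. by move=> i j; apply: polyfun_const. Qed.

Lemma polymx_add a b (f f' : Heis n -> 'M[C]_(a, b)) :
  polymx f -> polymx f' -> polymx (fun g => f g + f' g).
Proof.
move=> hf hf' i j; apply: (@polyfun_ext _ (fun g => f g i j + f' g i j)).
  by move=> g; rewrite mxE.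
exact: polyfun_add.
Qed.

Lemma polymx_mul a b c (f : Heis n -> 'M[C]_(a, b)) (f' : Heis n -> 'M[C]_(b, c)) :
  polymx f -> polymx f' -> polymx (fun g => f g *m f' g).
Proof.
move=> hf hf' i j; apply: (@polyfun_ext _ (fun g => \sum_k f g i k * f' g k j)).
  by move=> g; rewrite mxE.
by apply: polyfun_sum => k; apply: polyfun_mul.
Qed.

Lemma polymx_scale a b (s : Heis n -> C) (f : Heis n -> 'M[C]_(a, b)) :
  polyfun s -> polymx f -> polymx (fun g => s g *: f g).
Proof.
move=> hs hf i j; apply: (@polyfun_ext _ (fun g => s g * f g i j)).
  by move=> g; rewrite mxE.
exact: polyfun_mul.
Qed.

Lemma polymx_tr_coord : polymx (fun g : Heis n => g.1^T).
Proof.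
move=> i j; apply: (@polyfun_ext _ (fun g => g.1 0 i)); first by move=> g; rewrite mxE ord1.
exact: polyfun_coord.
Qed.

End HeisPolyFun.

Lemma sum_delta_mul (T : finType) (a : T) (F : T -> C) : \sum_j (j == a)%:R * F j = F a.
Proof.
rewrite (bigD1 a) // eqxx mul1r big1 ?Monoid.mulm1 // => j /negPf ->.
by rewrite mul0r.
Qed.

Lemma scalar_mx1_inj : injective (fun a : C => a%:M : 'M[C]_1).
Proof. by move=> a b /matrixP/(_ 0 0); rewrite !mxE eqxx !mulr1n. Qed.

Lemma scalar_mx1_eq0 (a : C) : (a%:M == 0 :> 'M[C]_1) = (a == 0).
Proof. by rewrite -[0 in LHS](raddf0 (@scalar_mx C 1)) (inj_eq scalar_mx1_inj). Qed.

Section Coordinates.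
Variable n : nat.
Local Notation N := (dimV n).

Definition wcoord (k : 'I_(n + n)) : 'I_N := @Ordinal N k.+1 (ltnW (ltn_ord k)).

Lemma wcoord_eq a b : (wcoord a == wcoord b) = (a == b).
Proof. by apply/inj_eq => a' b' [] /val_inj. Qed.

Lemma wcoord_neq0 k : (wcoord k == ord0) = false.
Proof. by []. Qed.

Lemma wcoord_neq_max k : (wcoord k == ord_max) = false.
Proof. by apply/negbTE; rewrite -val_eqE /= eqSS neq_ltn ltn_ord. Qed.

Lemma ord0_neq_max : ((ord0 : 'I_N) == ord_max) = false.
Proof. by []. Qed.

Variant coord_spec (i : 'I_N) : Type :=
 | Coord0 of i = ord0
 | CoordMax of i = ord_max
 | CoordW k of i = wcoord k.

Lemma coordP i : coord_spec i.
Proof.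
case: i => [[|m] hm]; first by apply: Coord0; apply: val_inj.
have [e|ne] := eqVneq m (n + n); first by apply: CoordMax; apply: val_inj => /=; rewrite e.
have hk : (m < n + n)%N by rewrite ltn_neqAle ne -ltnS.
by apply: (@CoordW _ (Ordinal hk)); apply: val_inj.
Qed.

Definition e0 : 'cV[C]_N := delta_mx ord0 0.
Definition elast : 'cV[C]_N := delta_mx ord_max 0.
Definition Wmx : 'M[C]_(N, n + n) := \matrix_(i, k) (i == wcoord k)%:R.

Lemma tr_e0_mul (x : 'cV[C]_N) : e0^T *m x = (x ord0 0)%:M.
Proof.
rewrite [LHS]mx11_scalar mxE -(sum_delta_mul ord0 (fun j => x j 0)).
by congr (_%:M); apply: eq_bigr => j _; rewrite !mxE eqxx andbT.
Qed.

Lemma tr_Wmx_mul (x : 'cV[C]_N) : Wmx^T *m x = \col_k x (wcoord k) 0.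
Proof.
apply/matrixP => k z; rewrite ord1 !mxE -(sum_delta_mul (wcoord k) (fun j => x j 0)).
by apply: eq_bigr => j _; rewrite !mxE.
Qed.

Lemma e0E i : e0 i 0 = (i == ord0)%:R.
Proof. by rewrite mxE eqxx andbT. Qed.

Lemma elastE i : elast i 0 = (i == ord_max)%:R.
Proof. by rewrite mxE eqxx andbT. Qed.

Lemma tr_e0_e0 : e0^T *m e0 = 1%:M.
Proof. by rewrite tr_e0_mul e0E eqxx. Qed.

Lemma tr_Wmx_e0 : Wmx^T *m e0 = 0.
Proof. by rewrite tr_Wmx_mul; apply/matrixP => k z; rewrite !mxE wcoord_neq0. Qed.

Lemma tr_Wmx_elast : Wmx^T *m elast = 0.
Proof. by rewrite tr_Wmx_mul; apply/matrixP => k z; rewrite !mxE wcoord_neq_max. Qed.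

Lemma tr_Wmx_Wmx : Wmx^T *m Wmx = 1%:M.
Proof.
apply/matrixP => a b; rewrite mxE [RHS]mxE.
transitivity (Wmx (wcoord a) b); last by rewrite mxE wcoord_eq.
rewrite -(sum_delta_mul (wcoord a) (fun j => Wmx j b)).
by apply: eq_bigr => j _; rewrite !mxE.
Qed.

Lemma tr_e0_Wmx_mul k (Y : 'M[C]_(n + n, k)) : e0^T *m (Wmx *m Y) = 0.
Proof. by rewrite mulmxA -[e0^T *m _]trmxK trmx_mul trmxK tr_Wmx_e0 trmx0 mul0mx. Qed.

Lemma tr_e0_elast_mul k (Y : 'M[C]_(1, k)) : e0^T *m (elast *m Y) = 0.
Proof. by rewrite mulmxA tr_e0_mul elastE ord0_neq_max raddf0 mul0mx. Qed.

Lemma tr_Wmx_elast_mul k (Y : 'M[C]_(1, k)) : Wmx^T *m (elast *m Y) = 0.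
Proof. by rewrite mulmxA tr_Wmx_elast mul0mx. Qed.

Lemma tr_Wmx_Wmx_mul k (Y : 'M[C]_(n + n, k)) : Wmx^T *m (Wmx *m Y) = Y.
Proof. by rewrite mulmxA tr_Wmx_Wmx mul1mx. Qed.

Definition coordvec (l : C) (u : 'rV[C]_(n + n)) (m : C) : 'cV[C]_N :=
  l *: e0 + Wmx *m u^T + m *: elast.

Lemma coordvec0 l u m : coordvec l u m ord0 0 = l.
Proof.
rewrite !mxE big1 => [|j _]; last by rewrite !mxE eq_sym wcoord_neq0 mul0r.
by rewrite !eqxx ord0_neq_max mulr1 mulr0 !addr0.
Qed.

Lemma coordvec_max l u m : coordvec l u m ord_max 0 = m.
Proof.
rewrite !mxE big1 => [|j _]; last by rewrite !mxE eq_sym wcoord_neq_max mul0r.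
by rewrite !eqxx eq_sym ord0_neq_max mulr1 mulr0 !add0r.
Qed.

Lemma coordvecW l u m k : coordvec l u m (wcoord k) 0 = u 0 k.
Proof.
rewrite !mxE wcoord_neq0 wcoord_neq_max !mulr0 addr0 add0r.
rewrite -(sum_delta_mul k (fun j => u 0 j)); apply: eq_bigr => j _.
by rewrite !mxE wcoord_eq eq_sym.
Qed.

Lemma coordvec_inj l u m l' u' m' :
  coordvec l u m = coordvec l' u' m' -> [/\ l = l', u = u' & m = m'].
Proof.
move=> e; split; first by rewrite -(coordvec0 l u m) e coordvec0.
  by apply/rowP => k; rewrite -(coordvecW l u m) e coordvecW.
by rewrite -(coordvec_max l u m) e coordvec_max.
Qed.

Lemma coordvecK (x : 'cV[C]_N) :
  coordvec (x ord0 0) (\row_k x (wcoord k) 0) (x ord_max 0) = x.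
Proof.
apply/matrixP => i z; rewrite ord1.
by case: (coordP i) => [->|->|k ->]; rewrite ?coordvec0 ?coordvec_max ?coordvecW ?mxE.
Qed.

Lemma coordvec_elast m : coordvec 0 0 m = m *: elast.
Proof. by rewrite /coordvec scale0r trmx0 mulmx0 !add0r. Qed.

Lemma coordvec_e0 l u m : l *: e0 + coordvec 0 u m = coordvec l u m.
Proof. by rewrite /coordvec scale0r add0r !addrA. Qed.

Lemma e0_neq0 : e0 != 0.
Proof. by apply/eqP => /matrixP/(_ ord0 0); rewrite !mxE !eqxx => /eqP; rewrite oner_eq0. Qed.

Lemma elast_neq0 : elast != 0.
Proof. by apply/eqP => /matrixP/(_ ord_max 0); rewrite !mxE !eqxx => /eqP; rewrite oner_eq0. Qed.

Lemma scale_coordvec c l u m : c *: coordvec l u m = coordvec (c * l) (c *: u) (c * m).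
Proof. by rewrite /coordvec !scalerDr !scalerA linearZ /= scalemxAr. Qed.

Definition qproj : 'M[C]_((n + n).+1, N) := \matrix_(i, j) ((i : nat) == j)%:R.

Lemma qproj_elast : qproj *m elast = 0.
Proof. by apply/matrixP => i z; rewrite -colE !mxE ltn_eqF. Qed.

Lemma rank_qproj : \rank qproj = (n + n).+1.
Proof.
apply/eqP/row_freeP; exists qproj^T; apply/matrixP => i j; rewrite !mxE.
transitivity (((j : nat) == i)%:R : C); last by rewrite eq_sym.
rewrite -(sum_delta_mul (widen_ord (leqnSn _) i) (fun k : 'I_N => ((j : nat) == k)%:R)).
by apply: eq_bigr => k _; rewrite !mxE -val_eqE /= eq_sym.
Qed.

Lemma qproj_Wmx_mul (w : 'rV[C]_(n + n)) i :
  (qproj *m Wmx *m w^T) i 0 = if unlift ord0 i is Some k then w 0 k else 0.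
Proof.
have qW i' k : (qproj *m Wmx) i' k = ((i' : nat) == k.+1)%:R.
  rewrite mxE -(sum_delta_mul (wcoord k) (fun j : 'I_N => ((i' : nat) == j)%:R)).
  by apply: eq_bigr => j _; rewrite !mxE mulrC.
rewrite mxE; case: unliftP => [k ->|->].
  rewrite -(sum_delta_mul k (fun j => w 0 j)); apply: eq_bigr => j _.
  by rewrite qW mxE /= eqSS eq_sym.
by rewrite big1 // => j _; rewrite qW mul0r.
Qed.

Lemma taut_mxE (w : 'rV[C]_(n + n)) :
  taut_mx w = 1%:M + qproj *m Wmx *m w^T *m (delta_mx ord0 0)^T.
Proof.
apply/matrixP => i j; rewrite !mxE big_ord1 qproj_Wmx_mul !mxE eqxx /=.
by rewrite andbT [in RHS]mulrC.
Qed.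

Lemma tr_delta0_qproj : (delta_mx (ord0 : 'I_(n + n).+1) 0)^T *m qproj = e0^T.
Proof.
rewrite trmx_delta -rowE; apply/matrixP => i j; rewrite !mxE.
by rewrite ord1 eqxx andbT -val_eqE eq_sym.
Qed.

End Coordinates.
Arguments e0 {n}. Arguments elast {n}. Arguments Wmx {n}. Arguments qproj {n}.

Section HomogeneousPolynomials.
Variable N : nat.

Definition coord_form (k : 'I_N) : seq (C * N.-tuple nat) :=
  [:: (1, [tuple (i == k : nat) | i < N])].

Lemma homog_coord_form k : homog 1 (coord_form k).
Proof.
rewrite /homog /= andbT (bigD1 k) //= tnth_mktuple eqxx big1 // => i /negPf ik.
by rewrite tnth_mktuple ik.
Qed.

Lemma heval_coord_form k x : heval (coord_form k) x = x k 0.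
Proof.
rewrite /heval big_seq1; cbn [fst snd]; rewrite mul1r (bigD1 k) // tnth_mktuple eqxx expr1.
by rewrite big1 ?Monoid.mulm1 // => i /negPf ik; rewrite tnth_mktuple ik expr0.
Qed.

Lemma heval_line_eq0 s (x y : 'cV[C]_N) :
  (forall a, a != 0 -> heval s (a *: x + y) = 0) -> heval s y = 0.
Proof.
move=> vanish.
pose P := \sum_(q <- s) q.1%:P * \prod_(i < N) (x i 0 *: 'X + (y i 0)%:P) ^+ tnth q.2 i.
have P_eval a : P.[a] = heval s (a *: x + y).
  rewrite horner_sum; apply: eq_bigr => q _.
  rewrite hornerM hornerC horner_prod; congr (_ * _); apply: eq_bigr => i _.
  by rewrite horner_exp hornerD hornerZ hornerX hornerC !mxE mulrC.
have P0 : P = 0.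
  apply: (@roots_geq_poly_eq0 _ _ [seq i.+1%:R | i <- iota 0 (size P)]).
  - by apply/allP => _ /mapP [i _ ->]; rewrite /root P_eval vanish // pnatr_eq0.
  - by rewrite map_inj_uniq ?iota_uniq // => a b /eqP; rewrite eqr_nat => /eqP [].
  - by rewrite size_map size_iota.
by rewrite -[y]add0r -(scale0r x) -P_eval P0 horner0.
Qed.

End HomogeneousPolynomials.

Definition qcomm_pair (N : nat) (c : C) (A : 'M[C]_N -> Prop) : Prop :=
  exists x y, [/\ A x /\ A y, x *m x = 0 /\ y *m y = 0, x *m y != 0 &
                  forall z, A z -> exists d : C, x *m z - c *: (z *m x) = d *: x].

Lemma qcomm_pair_iso N (S S' : 'M[C]_N -> Prop) c :
  alg_iso (gen_alg S) (gen_alg S') -> qcomm_pair c (gen_alg S) -> qcomm_pair c (gen_alg S').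
Proof.
move=> [f [fAB [fsurj [finj [fD [fZ [fM _]]]]]]] [x [y [[Ax Ay] [xx yy] xy xz]]].
have A0 : gen_alg S 0 by rewrite -(scale0r 1%:M); apply/gen_alg_scale/gen_alg_one.
have f0 : f 0 = 0 by have := fZ 0 _ A0; rewrite !scale0r.
exists (f x), (f y); split.
- by split; apply: fAB.
- by split; [rewrite -fM // xx f0 | rewrite -fM // yy f0].
- apply: contra_neq xy => fxy.
  by apply: finj; [exact: gen_alg_mul | exact: A0 | rewrite fM // fxy f0].
move=> _ /fsurj [z Az <-]; have [d e] := xz z Az; exists d.
have Axz := gen_alg_mul Ax Az; have Azx := gen_alg_mul Az Ax.
rewrite -!fM // -scaleNr -(fZ _ _ Azx) -fD //; last exact: gen_alg_scale.
by rewrite scaleNr e fZ.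
Qed.

Section TautAlgebra.
Variables (n : nat) (p : C).
Local Notation N := (dimV n).

Definition beta_row (w : 'rV[C]_(n + n)) : 'rV[C]_(n + n) :=
  row_mx ((p - 1) *: rsubmx w) (p *: lsubmx w).

Definition beta (w v : 'rV[C]_(n + n)) : C :=
  \sum_(i < n) (p * w 0 (lshift n i) * v 0 (rshift n i)
                + (p - 1) * w 0 (rshift n i) * v 0 (lshift n i)).

Definition qform (w : 'rV[C]_(n + n)) : C :=
  (p - 2^-1) * \sum_(i < n) w 0 (lshift n i) * w 0 (rshift n i).

Lemma beta_rowE w v : beta_row w *m v^T = (beta w v)%:M.
Proof.
rewrite [LHS]mx11_scalar; congr (_%:M).
rewrite mxE big_split_ord /beta big_split [LHS]addrC.
by apply: congr2; apply: eq_bigr => i _; rewrite /beta_row ?row_mxEl ?row_mxEr !mxE; ring.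
Qed.

Lemma beta_rowD w v : beta_row (w + v) = beta_row w + beta_row v.
Proof. by rewrite /beta_row !linearD /= add_row_mx. Qed.

Lemma beta_rowZ a w : beta_row (a *: w) = a *: beta_row w.
Proof. by rewrite /beta_row !linearZ /= scale_row_mx !scalerA. Qed.

Lemma beta0w v : beta 0 v = 0.
Proof. by rewrite /beta big1 // => i _; rewrite !mxE; ring. Qed.

Lemma qform0 : qform 0 = 0.
Proof. by rewrite /qform big1 ?mulr0 // => i _; rewrite !mxE mul0r. Qed.

(* The cocycle identity that makes [taut_rho] multiplicative. *)
Lemma qformD (w v : 'rV[C]_(n + n)) :
  2^-1 * omega w v + qform (w + v) = qform w + qform v + beta w v.
Proof.
rewrite /omega /qform /beta !mulr_sumr -!big_split /=.
by apply: eq_bigr => i _; rewrite !mxE; field.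
Qed.

Definition nilmx (u : 'rV[C]_(n + n)) : 'M[C]_N :=
  Wmx *m u^T *m e0^T + elast *m (beta_row u *m Wmx^T).

Definition Zmx : 'M[C]_N := elast *m e0^T.

Definition aelt (l : C) (u : 'rV[C]_(n + n)) (m : C) : 'M[C]_N :=
  l%:M + nilmx u + m *: Zmx.

Lemma nilmxD u v : nilmx (u + v) = nilmx u + nilmx v.
Proof.
by rewrite /nilmx beta_rowD linearD /= !mulmxDl !mulmxDr !mulmxDl [LHS]addrACA.
Qed.

Lemma nilmxZ a u : nilmx (a *: u) = a *: nilmx u.
Proof. by rewrite /nilmx beta_rowZ linearZ /= scalerDr -!scalemxAl -!scalemxAr -scalemxAl. Qed.

Lemma nilmx0 : nilmx 0 = 0.
Proof. by rewrite -(scale0r 0) nilmxZ scale0r. Qed.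

Lemma nilmx_mul u v : nilmx u *m nilmx v = beta u v *: Zmx.
Proof.
rewrite /nilmx /Zmx !mulmxDl !mulmxDr -!mulmxA.
rewrite !(tr_e0_Wmx_mul, tr_e0_elast_mul, tr_Wmx_elast_mul, tr_Wmx_Wmx_mul, mulmx0, add0r, addr0).
by rewrite (mulmxA (beta_row u)) beta_rowE mul_scalar_mx scalemxAr.
Qed.

Lemma nilmx_Zmx u : nilmx u *m Zmx = 0.
Proof.
rewrite /nilmx /Zmx !mulmxDl -!mulmxA.
by rewrite !(tr_e0_elast_mul, tr_Wmx_elast_mul, mulmx0, addr0).
Qed.

Lemma Zmx_nilmx u : Zmx *m nilmx u = 0.
Proof.
rewrite /nilmx /Zmx !mulmxDr -!mulmxA.
by rewrite !(tr_e0_Wmx_mul, tr_e0_elast_mul, mulmx0, addr0).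
Qed.

Lemma Zmx_Zmx : Zmx *m Zmx = 0.
Proof. by rewrite /Zmx -mulmxA tr_e0_elast_mul mulmx0. Qed.

Lemma aelt_mul l u m l' u' m' :
  aelt l u m *m aelt l' u' m' = aelt (l * l') (l *: u' + l' *: u) (l * m' + l' * m + beta u u').
Proof.
rewrite /aelt nilmxD !nilmxZ.
have := nilmx_mul u u'; have := nilmx_Zmx u; have := Zmx_nilmx u'; have := Zmx_Zmx.
move: (nilmx u) (nilmx u') Zmx => X Y Z ZZ ZY XZ XY.
rewrite !mulmxDl !mulmxDr !mul_scalar_mx !mul_mx_scalar -!scalemxAl -!scalemxAr.
rewrite XY XZ ZY ZZ !scaler0 !addr0 scale_scalar_mx !scalerDl !scalerA.
by rewrite !addrA (ACl (1*2*4*3*6*5)).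
Qed.

Lemma aelt_e0 l u m : aelt l u m *m e0 = coordvec l u m.
Proof.
rewrite /aelt /nilmx /Zmx !mulmxDl mul_scalar_mx -!mulmxA tr_e0_e0 mulmx1.
by rewrite tr_Wmx_e0 !mulmx0 addr0 -scalemxAl -mulmxA tr_e0_e0 mulmx1.
Qed.

Lemma aelt_inj l u m l' u' m' :
  aelt l u m = aelt l' u' m' -> [/\ l = l', u = u' & m = m'].
Proof. by move=> e; apply: coordvec_inj; rewrite -!aelt_e0 e. Qed.

Lemma aelt_scalar c : aelt c 0 0 = c%:M.
Proof. by rewrite /aelt nilmx0 scale0r !addr0. Qed.

Lemma aelt0 : aelt 0 0 0 = 0.
Proof. by rewrite aelt_scalar raddf0. Qed.

Lemma aeltD l u m l' u' m' : aelt l u m + aelt l' u' m' = aelt (l + l') (u + u') (m + m').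
Proof.
rewrite /aelt nilmxD raddfD scalerDl /=.
move: (l%:M) (l'%:M) (nilmx u) (nilmx u') (m *: Zmx) (m' *: Zmx) => a b c d e f.
by rewrite !addrA (ACl (1*4*2*5*3*6)).
Qed.

Lemma aeltZ c l u m : c *: aelt l u m = aelt (c * l) (c *: u) (c * m).
Proof. by rewrite /aelt nilmxZ !scalerDr scale_scalar_mx scalerA. Qed.

Definition taut_rho (g : Heis n) : 'M[C]_N := aelt 1 g.1 (g.2 + qform g.1).

Lemma taut_rho_mul g h : taut_rho g *m taut_rho h = taut_rho (hmul g h).
Proof.
rewrite /taut_rho /hmul aelt_mul mulr1 !scale1r; cbn [fst snd].
have qD : qform (g.1 + h.1) = qform g.1 + qform h.1 + beta g.1 h.1 - 2^-1 * omega g.1 h.1.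
  by rewrite -qformD; ring.
by rewrite qD (addrC h.1); congr (aelt _ _ _); ring.
Qed.

Lemma taut_rho_unit g : taut_rho g \in unitmx.
Proof.
have inv : taut_rho g *m aelt 1 (- g.1) (- (g.2 + qform g.1) - beta g.1 (- g.1)) = 1%:M.
  rewrite /taut_rho aelt_mul !mul1r !scale1r addNr -aelt_scalar; congr (aelt _ _ _); ring.
by case: (mulmx1_unit inv).
Qed.

Lemma taut_rho_scalar g : (exists c, taut_rho g = c%:M) -> g = hone n.
Proof.
case=> c; rewrite -aelt_scalar => /aelt_inj [_ w0 t0].
by case: g w0 t0 => w t /= -> ; rewrite qform0 addr0 => ->.
Qed.

Lemma polymx_beta_row : polymx (fun g : Heis n => beta_row g.1).
Proof.
move=> i k; case: (split_ordP k) => j ->.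
- apply: (@polyfun_ext _ _ (fun g => (p - 1) * g.1 0 (rshift n j))).
    by move=> g; rewrite /beta_row row_mxEl !mxE ord1.
  exact: polyfun_mul (polyfun_const _ _) (polyfun_coord _).
- apply: (@polyfun_ext _ _ (fun g => p * g.1 0 (lshift n j))).
    by move=> g; rewrite /beta_row row_mxEr !mxE ord1.
  exact: polyfun_mul (polyfun_const _ _) (polyfun_coord _).
Qed.

Lemma polyfun_qform : heis_polyfun (fun g : Heis n => qform g.1).
Proof.
apply: polyfun_mul; first exact: polyfun_const.
by apply: polyfun_sum => i; apply: polyfun_mul; apply: polyfun_coord.
Qed.

Lemma taut_rho_polymx : polymx taut_rho.
Proof.
apply: polymx_add; first apply: polymx_add.
- exact: polymx_const.
- apply: polymx_add; apply: polymx_mul.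
  + by apply: polymx_mul; [apply: polymx_const | apply: polymx_tr_coord].
  + exact: polymx_const.
  + exact: polymx_const.
  + by apply: polymx_mul; [apply: polymx_beta_row | apply: polymx_const].
- apply: polymx_scale; last exact: polymx_const.
  exact: polyfun_add (polyfun_center _) polyfun_qform.
Qed.

Lemma taut_orbit (x : 'cV[C]_N) :
  e0^T *m x != 0 <-> exists g, proj_eq (taut_rho g *m e0) x.
Proof.
rewrite tr_e0_mul scalar_mx1_eq0 /taut_rho; split => [x0|[g [c [c0 ->]]]].
  set w := (x ord0 0)^-1 *: \row_k x (wcoord k) 0.
  exists (w, (x ord0 0)^-1 * x ord_max 0 - qform w), (x ord0 0); split => //.
  rewrite aelt_e0 subrK scale_coordvec /w scalerA mulr1 !mulrA mulfV // !mul1r scale1r.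
  by rewrite coordvecK.
by rewrite aelt_e0 scale_coordvec coordvec0 mulr1.
Qed.

Lemma taut_rho_center t : taut_rho (hcent n t) = 1%:M + t *: Zmx.
Proof. by rewrite /taut_rho /= qform0 addr0 /aelt nilmx0 addr0. Qed.

Lemma taut_rho_center_e0 t : taut_rho (hcent n t) *m e0 = coordvec 1 0 t.
Proof. by rewrite aelt_e0 /= qform0 addr0. Qed.

Lemma taut_rho_center_fix (x : 'cV[C]_N) : e0^T *m x = 0 -> taut_rho (hcent n 1) *m x = x.
Proof.
by move=> x0; rewrite taut_rho_center mulmxDl mul1mx scale1r /Zmx -mulmxA x0 mulmx0 addr0.
Qed.

Definition center_orbit (y : 'cV[C]_N) : Prop :=
  exists t, proj_eq (taut_rho (hcent n t) *m e0) y.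

Lemma center_orbitP y : center_orbit y <-> exists a t, a != 0 /\ y = coordvec a 0 t.
Proof.
split => [[t [c [c0 ->]]]|[a [t [a0 ->]]]].
  by exists c, (c * t); rewrite taut_rho_center_e0 scale_coordvec mulr1 scaler0.
exists (t / a), a; split => //.
by rewrite taut_rho_center_e0 scale_coordvec mulr1 scaler0 mulrCA mulfV ?mulr1.
Qed.

Lemma center_orbit_boundary (x : 'cV[C]_N) : x != 0 ->
  (zclosure center_orbit x /\ ~ center_orbit x) <-> proj_eq elast x.
Proof.
move=> x0; split => [[[_ vanish] notI]|[c [c0 ->]]].
  have xW : \row_k x (wcoord k) 0 = 0.
    apply/rowP => k; rewrite !mxE -heval_coord_form.
    apply: (vanish 1%N _ (homog_coord_form _)) => y /center_orbitP [a [t [_ ->]]].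
    by rewrite heval_coord_form coordvecW mxE.
  have xE := coordvecK x; rewrite xW in xE.
  have x_0 : x ord0 0 = 0.
    apply/eqP/negPn/negP => a0; apply: notI; apply/center_orbitP.
    by exists (x ord0 0), (x ord_max 0).
  exists (x ord_max 0); split; last by rewrite -{1}xE x_0 coordvec_elast.
  by apply: contraNneq x0 => xm0; rewrite -xE x_0 xm0 coordvec_elast scale0r.
rewrite -coordvec_elast; split; last first.
  by case/center_orbitP => a [t [+ e]]; rewrite -(@coordvec0 n a 0 t) -e coordvec0 eqxx.
split; first by rewrite coordvec_elast scaler_eq0 negb_or c0 elast_neq0.
move=> d s _ vanish; apply: (heval_line_eq0 (x := e0)) => a a0.
by apply: vanish; apply/center_orbitP; exists a, c; rewrite coordvec_e0.
Qed.

Lemma qproj_taut_rho g : qproj *m taut_rho g = taut_mx g.1 *m qproj.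
Proof.
rewrite taut_mxE mulmxDl mul1mx -mulmxA tr_delta0_qproj /taut_rho /aelt /nilmx /Zmx.
rewrite !mulmxDr mulmx1 !mulmxA qproj_elast !mul0mx addr0 -scalemxAr mulmxA qproj_elast.
by rewrite mul0mx scaler0 addr0.
Qed.

Lemma taut_rho_Hstructure : Hstructure taut_rho e0^T e0.
Proof.
split; first exact: taut_rho_polymx.
split; first exact: taut_rho_unit.
split; first by move=> g h; exists 1; rewrite scale1r taut_rho_mul oner_neq0.
split; first exact: taut_rho_scalar.
split; first by rewrite -trmx0 (inj_eq trmx_inj) e0_neq0.
split; first exact: e0_neq0.
by move=> x _; apply: taut_orbit.
Qed.

Lemma taut_rho_tautological : tautological_structure taut_rho.
Proof.
exists e0^T, e0, elast, qproj; split; first exact: taut_rho_Hstructure.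
split; first by move=> x _ x0; exists 1; rewrite oner_neq0 scale1r taut_rho_center_fix.
split; first exact: elast_neq0.
split; first exact: center_orbit_boundary.
split; first exact: rank_qproj.
split; first exact: qproj_elast.
by move=> g; exists 1; rewrite oner_neq0 scale1r qproj_taut_rho.
Qed.

Lemma assoc_alg_taut_rhoP M : assoc_alg taut_rho M <-> exists l u m, M = aelt l u m.
Proof.
split.
  elim=> {M} [M [c [g [_ ->]]]| |M M' _ [l [u [m ->]]] _ [l' [u' [m' ->]]]
             |c M _ [l [u [m ->]]]|M M' _ [l [u [m ->]]] _ [l' [u' [m' ->]]]].
  - by rewrite aeltZ; eauto.
  - by exists 1, 0, 0; rewrite aelt_scalar.
  - by rewrite aeltD; eauto.
  - by rewrite aeltZ; eauto.
  - by rewrite aelt_mul; eauto.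
case=> l [u [m ->]].
have gen g : assoc_alg taut_rho (taut_rho g).
  by apply: gen_alg_gen; exists 1, g; rewrite scale1r oner_neq0.
have one : assoc_alg taut_rho 1%:M := gen_alg_one _.
have -> : aelt l u m = taut_rho (u, - qform u) + (-1) *: 1%:M
                       + (m *: (taut_rho (hcent n 1) + (-1) *: 1%:M) + l *: 1%:M).
  rewrite /taut_rho /= qform0 addNr -!aelt_scalar !aeltZ !aeltD !aeltZ !aeltD.
  by rewrite !(scaler0, addr0, add0r, mulr0, mulr1, addrN).
apply: gen_alg_add; apply: gen_alg_add.
- exact: gen.
- exact: gen_alg_scale one.
- by apply: gen_alg_scale; apply: gen_alg_add; [exact: gen | exact: gen_alg_scale one].
- exact: gen_alg_scale one.
Qed.

Definition wl (i : 'I_n) : 'rV[C]_(n + n) := delta_mx 0 (lshift n i).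
Definition wr (i : 'I_n) : 'rV[C]_(n + n) := delta_mx 0 (rshift n i).

Lemma beta_wl_l i v : beta (wl i) v = p * v 0 (rshift n i).
Proof.
rewrite /beta -(sum_delta_mul i (fun j => p * v 0 (rshift n j))); apply: eq_bigr => j _.
by rewrite /wl /wr !mxE !eq_shift eqxx ?andbF /=; ring.
Qed.

Lemma beta_wl_r i v : beta v (wl i) = (p - 1) * v 0 (rshift n i).
Proof.
rewrite /beta -(sum_delta_mul i (fun j => (p - 1) * v 0 (rshift n j))); apply: eq_bigr => j _.
by rewrite /wl /wr !mxE !eq_shift eqxx ?andbF /=; ring.
Qed.

Lemma beta_wr_l i v : beta (wr i) v = (p - 1) * v 0 (lshift n i).
Proof.
rewrite /beta -(sum_delta_mul i (fun j => (p - 1) * v 0 (lshift n j))); apply: eq_bigr => j _.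
by rewrite /wl /wr !mxE !eq_shift eqxx ?andbF /=; ring.
Qed.

Lemma beta_wr_r i v : beta v (wr i) = p * v 0 (lshift n i).
Proof.
rewrite /beta -(sum_delta_mul i (fun j => p * v 0 (lshift n j))); apply: eq_bigr => j _.
by rewrite /wl /wr !mxE !eq_shift eqxx ?andbF /=; ring.
Qed.

Lemma aelt_nil_mul u v : aelt 0 u 0 *m aelt 0 v 0 = aelt 0 0 (beta u v).
Proof. by rewrite aelt_mul !mul0r !scale0r !addr0 add0r. Qed.

Lemma aelt_in_assoc_alg l u m : assoc_alg taut_rho (aelt l u m).
Proof. by apply/assoc_alg_taut_rhoP; eauto. Qed.

Lemma qcomm_pair_taut (i : 'I_n) : p != 0 -> p - 1 != 0 ->
  qcomm_pair (p / (p - 1)) (assoc_alg taut_rho).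
Proof.
move=> p0 p1; have wl_r : wl i 0 (rshift n i) = 0 by rewrite mxE eq_shift andbF.
have wr_l : wr i 0 (lshift n i) = 0 by rewrite mxE eq_shift andbF.
have wr_r : wr i 0 (rshift n i) = 1 by rewrite mxE !eqxx.
exists (aelt 0 (wl i) 0), (aelt 0 (wr i) 0); split.
- by split; apply: aelt_in_assoc_alg.
- by split; rewrite aelt_nil_mul ?beta_wl_l ?beta_wr_l ?wl_r ?wr_l mulr0 aelt0.
- rewrite aelt_nil_mul beta_wl_l wr_r mulr1 -aelt0.
  by apply: contra_neq p0 => /aelt_inj [].
move=> _ /assoc_alg_taut_rhoP [l [v [m ->]]]; exists ((1 - p / (p - 1)) * l).
rewrite !aelt_mul -scaleNr !aeltZ aeltD beta_wl_l beta_wl_r.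
apply: f_equal3; first ring.
- by rewrite !scale0r add0r addr0 !scalerA -scalerDl mulrBl mul1r mulNr.
- by field.
Qed.

Lemma no_qcomm_pair_taut c : p - 1 != c * p -> p != c * (p - 1) ->
  ~ qcomm_pair c (assoc_alg taut_rho).
Proof.
move=> c1 c2 [_ [_ [[/assoc_alg_taut_rhoP [l [u [m ->]]] /assoc_alg_taut_rhoP [l' [u' [m' ->]]]]
                    [xx yy] xy xz]]].
move: xx yy; rewrite !aelt_mul -aelt0 => /aelt_inj [/eqP + _ _] /aelt_inj [/eqP + _ _].
rewrite !mulf_eq0 !orbb => /eqP l0 /eqP l0'; subst l l'.
have u0 : u != 0.
  by apply: contra_neq xy => ->; rewrite aelt_mul beta0w !mul0r !scale0r !addr0 aelt0.
have beta_rel v : beta u v = c * beta v u.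
  have [d] := xz _ (aelt_in_assoc_alg 0 v 0).
  rewrite !aelt_mul -scaleNr !aeltZ aeltD => /aelt_inj [_ du dm].
  have d0 : d = 0.
    move: du; rewrite !(scale0r, addr0, scaler0) => /esym/eqP.
    by rewrite scaler_eq0 (negbTE u0) orbF => /eqP.
  move: dm; rewrite d0 !(mul0r, mulr0, add0r, addr0) mulNr => /eqP.
  by rewrite subr_eq0 => /eqP.
apply: (negP u0); apply/eqP/rowP => k; rewrite mxE; case: (split_ordP k) => i ->.
- have := beta_rel (wr i); rewrite beta_wr_r beta_wr_l mulrA => /eqP.
  by rewrite -subr_eq0 -mulrBl mulf_eq0 subr_eq0 (negbTE c2) => /eqP.
- have := beta_rel (wl i); rewrite beta_wl_r beta_wl_l mulrA => /eqP.
  by rewrite -subr_eq0 -mulrBl mulf_eq0 subr_eq0 (negbTE c1) => /eqP.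
Qed.

End TautAlgebra.

Lemma natr_eq_frac (a b c d : nat) :
  (a%:R : C) = b%:R / c.+1%:R * d%:R -> (a * c.+1 = b * d)%N.
Proof.
move=> e; apply/eqP; rewrite -(eqr_nat C) !natrM e; apply/eqP; field.
by rewrite addrC natr1 pnatr_eq0.
Qed.

Lemma natrS2B1 m : (m.+2%:R - 1 : C) = m.+1%:R.
Proof. by rewrite mulrSr addrK. Qed.

Theorem proposition3p10 (n : nat) (hn : (1 <= n)%N) :
  exists A : nat -> ('M[C]_(dimV n) -> Prop),
    (forall k, tautological_algebra (A k)) /\
    (forall k l, k <> l -> ~ alg_iso (A k) (A l)).
Proof.
pose p k : C := k.+2%:R.
exists (fun k => assoc_alg (@taut_rho n (p k))); split.
  by move=> k; exists (@taut_rho n (p k)); split; [apply: taut_rho_tautological | ].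
move=> k l kl iso.
have p0 : p k != 0 by rewrite pnatr_eq0.
have p1 : p k - 1 != 0 by rewrite natrS2B1 pnatr_eq0.
have := qcomm_pair_iso iso (qcomm_pair_taut (Ordinal hn) p0 p1).
by apply: no_qcomm_pair_taut; rewrite /p !natrS2B1; apply/eqP => /natr_eq_frac; lia.
Qed.
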